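(* Let $\Sigma$ be a ranked alphabet, $B$ a strong bimonoid and $\mathcal{A}=(Q,\delta,F)$ a $(\Sigma,B)$-wta. If $\mathcal{A}$ has the finite order property, then $[\![\mathcal{R}(\mathcal{A})]\!]^{\mathrm{run}}=[\![\mathcal{A}]\!]^{\mathrm{run}}$.
   Context: Ranked alphabet $\Sigma$ ($\Sigma^{(0)}\ne\emptyset$), trees $T_\Sigma$, positions $\mathrm{pos}(\xi)$ ($\mathrm{pos}(\sigma(\xi_1,\dots,\xi_k))=\{\varepsilon\}\cup\{iv\mid v\in\mathrm{pos}(\xi_i)\}$); strong bimonoid $(B,\oplus,\otimes,\mathbb{0},\mathbb{1})$ (commutative monoid $(B,\oplus,\mathbb{0})$, monoid $(B,\otimes,\mathbb{1})$, $\mathbb{0}\ne\mathbb{1}$, $\mathbb{0}$ absorbing, no distributivity). For $b\in B$, $nb$ is the $n$-fold sum ($0b=\mathbb{0}$); $b$ has finite order if $\{nb\mid n\in\mathbb{N}\}$ is finite; then index $i(b)$ is the least $i\ge1$ with $ib=(i+k)b$ for some $k\ge1$, period $p(b)$ the least $p\ge1$ with $i(b)b=(i(b)+p)b$. $(\Sigma,B)$-wta $\mathcal{A}=(Q,\delta,F)$: $Q$ finite nonempty, $\delta_k:Q^k\times\Sigma^{(k)}\times Q\to B$, $F:Q\to B$. Runs: maps $\rho:\mathrm{pos}(\xi)\to Q$ ($R_{\mathcal{A}}(\xi)$; $q$-runs $R_{\mathcal{A}}(q,\xi)$ those with $\rho(\varepsilon)=q$); $\rho|_i(w)=\rho(iw)$;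 $\mathrm{wt}_{\mathcal{A}}(\rho)=\big(\bigotimes_{i=1}^k\mathrm{wt}_{\mathcal{A}}(\rho|_i)\big)\otimes\delta_k(\rho(1)\dots\rho(k),\sigma,\rho(\varepsilon))$; $[\![\mathcal{A}]\!]^{\mathrm{run}}(\xi)=\bigoplus_{\rho\in R_{\mathcal{A}}(\xi)}\mathrm{wt}_{\mathcal{A}}(\rho)\otimes F_{\rho(\varepsilon)}$. $H_{\mathcal{A}}$ is the smallest subset of $B$ containing $\bigcup_k\mathrm{im}(\delta_k)$ and closed under $\otimes$. $\mathcal{A}$ has the finite order property if $H_{\mathcal{A}}$ is finite and every element of $H_{\mathcal{A}}\otimes\mathrm{im}(F)=\{a\otimes c\mid a\in H_{\mathcal{A}},c\in\mathrm{im}(F)\}$ has finite order in $(B,\oplus,\mathbb{0})$. Then let $i_{\mathcal{A}}=\max\{i(b)\mid b\in H_{\mathcal{A}}\otimes\mathrm{im}(F)\}$, $p_{\mathcal{A}}=\mathrm{lcm}\{p(b)\mid b\in H_{\mathcal{A}}\otimes\mathrm{im}(F)\}$, $J_{\mathcal{A}}(n)=n$ if $n<i_{\mathcal{A}}$ and $J_{\mathcal{A}}(n)=i_{\mathcal{A}}+((n-i_{\mathcal{A}})\bmod p_{\mathcal{A}})$ otherwise. For $\xi\in T_\Sigma$ and $(q,b)\in Q\times H_{\mathcal{A}}$ let $p_\xi(q,b)=|\{\rho\in R_{\mathcal{A}}(q,\xi)\mid\mathrm{wt}_{\mathcal{A}}(\rho)=b\}|$ and $\pi_\xi(q,b)=J_{\mathcal{A}}(p_\xi(q,b))$,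 so $\pi_\xi:Q\times H_{\mathcal{A}}\to[0,i_{\mathcal{A}}+p_{\mathcal{A}}-1]$. $\mathcal{R}(\mathcal{A})=(Q_{\mathcal{R}},\delta_{\mathcal{R}},F_{\mathcal{R}})$ is the wta with $Q_{\mathcal{R}}=\{\pi_\xi\mid\xi\in T_\Sigma\}$ (a finite set); $(\delta_{\mathcal{R}})_k(\pi_{\xi_1}\dots\pi_{\xi_k},\sigma,\pi)=\mathbb{1}$ if $\pi=\pi_{\sigma(\xi_1,\dots,\xi_k)}$ and $\mathbb{0}$ otherwise (this depends only on $\pi_{\xi_1},\dots,\pi_{\xi_k}$, not on the chosen $\xi_i$); $(F_{\mathcal{R}})_{\pi_\xi}=\bigoplus_{(q,b)\in Q\times H_{\mathcal{A}}}\pi_\xi(q,b)(b\otimes F_q)$. *)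

From mathcomp Require Import all_boot.
From mathcomp Require Import boolp.

Set Implicit Arguments.
Unset Strict Implicit.
Unset Printing Implicit Defensive.

Record strong_bimonoid (B : eqType) := StrongBimonoid {
  sb_add : B -> B -> B;
  sb_mul : B -> B -> B;
  sb_zero : B;
  sb_one : B;
  sb_addA : associative sb_add;
  sb_addC : commutative sb_add;
  sb_add0l : left_id sb_zero sb_add;
  sb_mulA : associative sb_mul;
  sb_mul1l : left_id sb_one sb_mul;
  sb_mul1r : right_id sb_one sb_mul;
  sb_mul0l : left_zero sb_zero sb_mul;
  sb_mul0r : right_zero sb_zero sb_mul;
  sb_zero_neq_one : sb_zero <> sb_one }.

Inductive tree (Sigma : Type) := Node of Sigma & seq (tree Sigma).
Arguments Node {Sigma}.

Fixpoint wf_tree (Sigma : Type) (rank : Sigma -> nat) (t : tree Sigma) : bool :=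
  let: Node s ts := t in
  (size ts == rank s) &&
  (fix wfl (ts : seq (tree Sigma)) : bool :=
     if ts is t' :: ts' then wf_tree rank t' && wfl ts' else true) ts.

(* positions are words over nat (children numbered 1..k); runs are maps
   positions -> states, represented as functions on seq nat. *)
Definition restr (S : Type) (rho : seq nat -> S) (i : nat) : seq nat -> S :=
  fun w => rho (i :: w).

Definition mkrun (S : Type) (q : S) (rs : seq (seq nat -> S)) : seq nat -> S :=
  fun w => match w with
           | [::] => q
           | i :: w' => nth (fun _ => q) rs i.-1 w'
           end.

Fixpoint cart (X : Type) (ss : seq (seq X)) : seq (seq X) :=
  match ss with
  | [::] => [:: [::]]
  | s :: ss' => [seq x :: r | x <- s, r <- cart ss']
  end.

Section RunSemantics.
Variables (Sigma : Type) (B : eqType) (SB : strong_bimonoid B).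
Variables (S : Type) (states : seq S)
          (delta : seq S -> Sigma -> S -> B) (F : S -> B).

(* R(xi): an enumeration (one function per map pos(xi) -> S) of all runs *)
Fixpoint runs (t : tree Sigma) : seq (seq nat -> S) :=
  let: Node s ts := t in
  [seq mkrun q rs | q <- states,
     rs <- cart ((fix rl (ts : seq (tree Sigma)) : seq (seq (seq nat -> S)) :=
                    if ts is t' :: ts' then runs t' :: rl ts' else [::]) ts)].

Fixpoint wt (t : tree Sigma) (rho : seq nat -> S) : B :=
  let: Node s ts := t in
  sb_mul SB
    ((fix wl (ts : seq (tree Sigma)) (i : nat) : B :=
        if ts is t' :: ts' then sb_mul SB (wt t' (restr rho i)) (wl ts' i.+1)
        else sb_one SB) ts 1)
    (delta [seq rho [:: i] | i <- iota 1 (size ts)] s (rho [::])).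

Definition bsum (l : seq B) : B := foldr (sb_add SB) (sb_zero SB) l.

Definition sem_run (t : tree Sigma) : B :=
  bsum [seq sb_mul SB (wt t rho) (F (rho [::])) | rho <- runs t].

End RunSemantics.

(* a duplicate-free list enumerating exactly the finite set P (classical
   choice); [::] if P is not finite *)
Definition enum_of (T : eqType) (P : T -> Prop) : seq T :=
  match pselect (exists s : seq T, uniq s /\ forall x, x \in s <-> P x) with
  | left h => projT1 (cid h)
  | right _ => [::]
  end.

Section FiniteOrder.
Variables (B : eqType) (SB : strong_bimonoid B).

Definition nsum (n : nat) (b : B) : B := iter n (sb_add SB b) (sb_zero SB).

Definition finite_order (b : B) : Prop :=
  exists s : seq B, forall n, nsum n b \in s.

Definition index_pred (b : B) : pred nat :=
  fun i => (0 < i) && `[< exists k, 0 < k /\ nsum i b = nsum (i + k) b >].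

Definition index (b : B) : nat :=
  match pselect (exists i, index_pred b i) with
  | left h => ex_minn h
  | right _ => 0
  end.

Definition period_pred (b : B) : pred nat :=
  fun p => (0 < p) && (nsum (index b) b == nsum (index b + p) b).

Definition period (b : B) : nat :=
  match pselect (exists p, period_pred b p) with
  | left h => ex_minn h
  | right _ => 0
  end.
End FiniteOrder.

Section Construction.
Variables (Sigma : finType) (rank : Sigma -> nat).
Variables (B : eqType) (SB : strong_bimonoid B).
Variables (Q : finType) (delta : seq Q -> Sigma -> Q -> B) (F : Q -> B).

Inductive inH : B -> Prop :=
  | inH_delta (s : Sigma) (qs : seq Q) (q : Q) :
      size qs = rank s -> inH (delta qs s q)
  | inH_mul (a c : B) : inH a -> inH c -> inH (sb_mul SB a c).

Definition finite_order_property : Prop :=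
  (exists s : seq B, forall b, inH b -> b \in s) /\
  (forall a q, inH a -> finite_order SB (sb_mul SB a (F q))).

Definition Hlist : seq B := enum_of inH.

Definition HF : seq B := [seq sb_mul SB a (F q) | a <- Hlist, q <- enum Q].

Definition iA : nat := \max_(b <- HF) index SB b.
Definition pA : nat := foldr lcmn 1 [seq period SB b | b <- HF].

Definition JA (n : nat) : nat := if n < iA then n else iA + (n - iA) %% pA.

Definition semA : tree Sigma -> B := sem_run SB (enum Q) delta F.

Definition QH : seq (Q * B) := [seq (q, a) | q <- enum Q, a <- Hlist].

Definition pcount (t : tree Sigma) (q : Q) (b : B) : nat :=
  count (fun rho => (rho [::] == q) && (wt SB delta t rho == b))
        (runs (enum Q) t).

(* pi_xi, represented as the list of its values along QH *)
Definition pi_of (t : tree Sigma) : seq nat :=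
  [seq JA (pcount t qb.1 qb.2) | qb <- QH].

Definition QR : seq (seq nat) :=
  enum_of (fun p : seq nat => exists t, wf_tree rank t /\ pi_of t = p).

Definition deltaR (ps : seq (seq nat)) (s : Sigma) (p : seq nat) : B :=
  if `[< exists ts : seq (tree Sigma),
           wf_tree rank (Node s ts) /\ map pi_of ts = ps /\ pi_of (Node s ts) = p >]
  then sb_one SB else sb_zero SB.

Definition FR (p : seq nat) : B :=
  bsum SB [seq nsum SB nqb.1 (sb_mul SB nqb.2.2 (F nqb.2.1)) | nqb <- zip p QH].

Definition semR : tree Sigma -> B := sem_run SB QR deltaR FR.

End Construction.

From HB Require Import structures.
From Pilot Require Import Defs.
From mathcomp Require Import all_boot.
From mathcomp Require Import boolp.
From mathcomp Require Import zify.

Set Implicit Arguments.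
Unset Strict Implicit.
Unset Printing Implicit Defensive.

(* Group the runs of A on a tree xi by their root state and weight (q, b):
   [[A]](xi) is the sum over (q, b) of p_xi(q, b) copies of b * F_q.  Every
   b * F_q has index at most i_A and period dividing p_A, so p_xi(q, b) may be
   replaced by J_A(p_xi(q, b)) = pi_xi(q, b); this gives (F_R)(pi_xi) = [[A]](xi).
   The counts at sigma(xi_1, ..., xi_k) are sums of products of counts at the
   xi_j, and J_A is a congruence for + and *, so pi_sigma(xi_1..xi_k) depends
   only on pi_xi_1, ..., pi_xi_k.  Hence delta_R is well defined, and on xi the
   only run of R(A) with nonzero weight labels every position with pi of the
   subtree below it and has weight 1, so [[R(A)]](xi) = (F_R)(pi_xi). *)

Lemma enum_ofP (T : eqType) (P : T -> Prop) :
  (exists s : seq T, forall x, P x -> x \in s) ->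
  uniq (enum_of P) /\ forall x, x \in enum_of P <-> P x.
Proof.
move=> [s Ps]; rewrite /enum_of; case: pselect => [h|nh].
  by case: (cid h) => l /= [].
exfalso; apply: nh; exists (undup [seq x <- s | `[< P x >]]); split.
  exact: undup_uniq.
move=> x; rewrite mem_undup mem_filter; split; first by case/andP => /asboolP.
by move=> Px; rewrite Ps // andbT; apply/asboolP.
Qed.

Lemma count_allpairs (X Y Z : Type) (P : pred Z) (f : X -> Y -> Z) s t :
  count P [seq f x y | x <- s, y <- t] = \sum_(x <- s) count (fun y => P (f x y)) t.
Proof. by elim: s => [|x s IH]; rewrite ?big_nil // big_cons count_cat count_map IH. Qed.

Lemma filter_allpairs_restr (X Y Z : Type) (P : pred Z) (R : pred Y)
    (f : X -> Y -> Z) s t :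
  (forall x y, P (f x y) -> R y) ->
  filter P [seq f x y | x <- s, y <- t] = filter P [seq f x y | x <- s, y <- filter R t].
Proof.
move=> PR; elim: s => //= x s IH; rewrite !filter_cat IH !filter_map -filter_predI.
congr (map _ _ ++ _); apply: eq_filter => y /=.
by case Pxy: (P (f x y)); rewrite ?(PR _ _ Pxy).
Qed.

Lemma big_count_mem_iter (R : Type) (idx : R) (op : Monoid.com_law idx)
    (X : eqType) (D L : seq X) (g : X -> R) :
  uniq D -> all (mem D) L ->
  \big[op/idx]_(x <- L) g x = \big[op/idx]_(y <- D) iter (count_mem y L) (op (g y)) idx.
Proof.
move=> uD DL.
transitivity (\big[op/idx]_(x <- L) \big[op/idx]_(y <- D | y == x) g y).
  apply: eq_big_seq => x Lx.
  by rewrite -big_filter (filter_pred1_uniq uD) ?big_seq1 //; apply: (allP DL).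
under eq_bigr do rewrite big_mkcond.
rewrite exchange_big; apply: eq_bigr => y _.
rewrite -big_mkcond big_const_seq; congr iter; apply: eq_count => x /=.
by rewrite eq_sym.
Qed.

Lemma cart_sizes (X : Type) (Ls : seq (seq X)) :
  all (fun rs => size rs == size Ls) (cart Ls).
Proof.
elim: Ls => //= L Ls IH; elim: L => //= x L; rewrite all_cat => ->.
by rewrite andbT all_map; apply: sub_all IH => rs.
Qed.

Lemma cart_map_zip (T X Y : Type) (g : T -> X -> Y) (h : T -> seq X) (ts : seq T) :
  cart [seq map (g t) (h t) | t <- ts] =
  [seq [seq g p.1 p.2 | p <- zip ts rs] | rs <- cart (map h ts)].
Proof.
by elim: ts => //= t ts IH; rewrite IH allpairs_mapl allpairs_mapr map_allpairs.
Qed.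

Lemma filter_all_cart (X : Type) (P : pred X) (Ls : seq (seq X)) :
  filter (all P) (cart Ls) = cart (map (filter P) Ls).
Proof.
elim: Ls => //= L Ls <-; elim: L => //= x L IHL; rewrite filter_cat IHL filter_map.
case Px: (P x) => /=.
  by congr (map _ _ ++ _); apply: eq_filter => r /=; rewrite Px.
by rewrite (@eq_filter _ _ pred0) ?filter_pred0 // => r /=; rewrite Px.
Qed.

Lemma cart_seq1 (T X : Type) (f : T -> X) (ts : seq T) :
  cart [seq [:: f t] | t <- ts] = [:: map f ts].
Proof. by elim: ts => //= t ts ->. Qed.

Lemma mem_cart_nseq (X : eqType) (D l : seq X) :
  all (mem D) l -> l \in cart (nseq (size l) D).
Proof.
elim: l => [|x l IH] /=; first by rewrite inE.
by case/andP=> Dx Dl; apply: (allpairs_f (fun x r => x :: r)) => //; apply: IH.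
Qed.

Lemma tree_ind_In (Sigma : Type) (P : tree Sigma -> Prop) :
  (forall s ts, (forall t, List.In t ts -> P t) -> P (Node s ts)) -> forall t, P t.
Proof.
move=> IH; fix rec 1.
case=> s ts; apply: IH.
elim: ts => [|t' ts IHts] t /=; first by case.
by case=> [<-|]; [apply: rec | apply: IHts].
Qed.

Lemma eq_map_In (T U : Type) (f g : T -> U) (l : seq T) :
  (forall x, List.In x l -> f x = g x) -> map f l = map g l.
Proof. exact: List.map_ext_in. Qed.

Lemma all_In (T : Type) (a : pred T) (l : seq T) x : all a l -> List.In x l -> a x.
Proof. by elim: l => //= y l IH /andP[ay al] [<-|/IH]; auto. Qed.

Lemma wf_tree_node (Sigma : Type) (rank : Sigma -> nat) s ts :
  wf_tree rank (Node s ts) = (size ts == rank s) && all (wf_tree rank) ts.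
Proof. by rewrite /=; congr andb; elim: ts => //= t ts ->. Qed.

Lemma runs_node (Sigma S : Type) (states : seq S) s (ts : seq (tree Sigma)) :
  runs states (Node s ts) =
  [seq mkrun q rs | q <- states, rs <- cart (map (runs states) ts)].
Proof. by rewrite /=; apply: eq_allpairsr => q; congr cart; elim: ts => //= t ts ->. Qed.

Section CycMod.
Variables i p : nat.

(* [cycmod i p n] is the representative of [n] in the cyclic monoid of index
   [i] and period [p]; [JA] is [cycmod iA pA]. *)
Definition cycmod n := if n < i then n else i + (n - i) %% p.

Lemma cycmodDl a b : cycmod (a + b) = cycmod (cycmod a + b).
Proof.
rewrite /cycmod; case: (ltnP a i) => ia //; rewrite !ifF; try lia.
have -> : a + b - i = a - i + b by lia.
have -> : i + (a - i) %% p + b - i = (a - i) %% p + b by lia.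
by rewrite modnDml.
Qed.

Lemma cycmodMl a b : cycmod (a * b) = cycmod (cycmod a * b).
Proof.
rewrite /cycmod; case: (ltnP a i) => ia //; case: b => [|b]; first by rewrite !muln0.
set r := (a - i) %% p.
rewrite !ifF; try nia.
have -> : a * b.+1 - i = (a - i) * b.+1 + i * b by nia.
have -> : (i + r) * b.+1 - i = r * b.+1 + i * b by nia.
by rewrite -modnDml -modnMml modnDml.
Qed.

Lemma cycmodD a b : cycmod (a + b) = cycmod (cycmod a + cycmod b).
Proof. by rewrite cycmodDl addnC cycmodDl addnC. Qed.

Lemma cycmodM a b : cycmod (a * b) = cycmod (cycmod a * cycmod b).
Proof. by rewrite cycmodMl mulnC cycmodMl mulnC. Qed.

Lemma cycmod_sum (X : eqType) (D : seq X) (f g : X -> nat) :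
  {in D, forall x, cycmod (f x) = cycmod (g x)} ->
  cycmod (\sum_(x <- D) f x) = cycmod (\sum_(x <- D) g x).
Proof.
move=> fg; rewrite !big_seq; apply: (big_ind2 (fun m n => cycmod m = cycmod n)) => //.
by move=> m m' n n' mm' nn'; rewrite cycmodD mm' nn' -cycmodD.
Qed.

Definition count_profile (X : eqType) (D L : seq X) : seq nat :=
  [seq cycmod (count_mem k L) | k <- D].

Lemma cycmod_count_cart (X : eqType) (D : seq X) (Ls Ls' : seq (seq X)) (P : pred (seq X)) :
  uniq D -> all (all (mem D)) Ls -> all (all (mem D)) Ls' ->
  map (count_profile D) Ls = map (count_profile D) Ls' ->
  cycmod (count P (cart Ls)) = cycmod (count P (cart Ls')).
Proof.
move=> uD; elim: Ls Ls' P => [|L Ls IH] [|L' Ls'] P //= /andP[DL DLs] /andP[DL' DLs'] [].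
move/eq_in_map => LL' LsLs'.
rewrite !count_allpairs (big_count_mem_iter _ _ uD DL) (big_count_mem_iter _ _ uD DL').
apply: cycmod_sum => y Dy; rewrite !iter_addn_0 cycmodM [RHS]cycmodM LL' //.
by rewrite (IH Ls').
Qed.

End CycMod.

Definition badd (B : eqType) (SB : strong_bimonoid B) := sb_add SB.
HB.instance Definition _ (B : eqType) (SB : strong_bimonoid B) :=
  Monoid.isComLaw.Build B (sb_zero SB) (badd SB)
    (@sb_addA B SB) (@sb_addC B SB) (@sb_add0l B SB).

Definition bprod (B : eqType) (SB : strong_bimonoid B) (l : seq B) : B :=
  foldr (sb_mul SB) (sb_one SB) l.

Section StrongBimonoid.
Variables (B : eqType) (SB : strong_bimonoid B).
Local Notation add := (sb_add SB).
Local Notation mul := (sb_mul SB).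
Local Notation zero := (sb_zero SB).
Local Notation nsum := (nsum SB).

Lemma sb_one_neq0 : sb_one SB != zero.
Proof. by apply/eqP => /esym; apply: sb_zero_neq_one. Qed.

Lemma bsumE (l : seq B) : bsum SB l = \big[badd SB/zero]_(x <- l) x.
Proof. exact: foldrE. Qed.

Lemma bprod_map_one (T : Type) (l : seq T) : bprod SB [seq sb_one SB | _ <- l] = sb_one SB.
Proof. by elim: l => //= x l ->; apply: sb_mul1l. Qed.

Lemma bprod_eq0 (l : seq B) : zero \in l -> bprod SB l = zero.
Proof.
elim: l => //= x l IH; rewrite inE => /orP[/eqP <-|/IH ->].
  exact: sb_mul0l.
exact: sb_mul0r.
Qed.

Lemma nsumD m n c : nsum (m + n) c = add (nsum m c) (nsum n c).
Proof.
elim: m => [|m IH]; first by rewrite sb_add0l.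
by rewrite addSn /= IH sb_addA.
Qed.

Lemma nsum_add_period i0 p0 c k m : nsum i0 c = nsum (i0 + p0) c ->
  i0 <= m -> nsum (m + k * p0) c = nsum m c.
Proof.
move=> per i0m.
have step n : i0 <= n -> nsum (n + p0) c = nsum n c.
  by move=> i0n; rewrite -(subnK i0n) -addnA nsumD -per -nsumD.
elim: k => [|k IH]; first by rewrite addn0.
by rewrite mulSn addnCA addnC step ?IH // (leq_trans i0m (leq_addr _ _)).
Qed.

Lemma finite_order_repeats c : finite_order SB c -> exists i, index_pred SB c i.
Proof.
move=> [s sP].
have : ~~ uniq [seq nsum n c | n <- iota 1 (size s).+1].
  apply/negP => /uniq_leq_size leq_s.
  have /leq_s : {subset [seq nsum n c | n <- iota 1 (size s).+1] <= s}.
    by move=> _ /mapP[n _ ->].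
  by rewrite size_map size_iota ltnn.
move/(uniqPn zero) => [i [j [ij]]]; rewrite size_map size_iota => jlt.
have ilt := ltn_trans ij jlt.
rewrite !(nth_map 0) ?size_iota ?nth_iota // !add1n => Eij.
exists i.+1; apply/andP; split=> //; apply/asboolP; exists (j - i).
by split; [rewrite subn_gt0 | rewrite Eij; congr nsum; lia].
Qed.

Lemma finite_order_period c : finite_order SB c ->
  0 < period SB c /\ nsum (Defs.index SB c) c = nsum (Defs.index SB c + period SB c) c.
Proof.
move=> /finite_order_repeats[i ii].
have /andP[_ /asboolP[k [k_gt0 Ek]]] : index_pred SB c (Defs.index SB c).
  rewrite /Defs.index; case: pselect => [h|[]]; [by case: ex_minnP | by exists i].
have /andP[period_gt0 /eqP Ep] : period_pred SB c (period SB c).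
  rewrite /period; case: pselect => [h|[]]; first by case: ex_minnP.
  by exists k; rewrite /period_pred k_gt0 Ek eqxx.
by split.
Qed.

Lemma nsum_cycmod i p c n : finite_order SB c ->
  Defs.index SB c <= i -> period SB c %| p -> nsum (cycmod i p n) c = nsum n c.
Proof.
move=> /finite_order_period[_ per] idx_i /dvdnP[d ->].
rewrite /cycmod; case: ltnP => // i_n.
rewrite -(nsum_add_period ((n - i) %/ (d * period SB c) * d) per); last by lia.
congr nsum; move: (divn_eq (n - i) (d * period SB c)); rewrite mulnA.
set q := (n - i) %/ _; set r := (n - i) %% _; lia.
Qed.

End StrongBimonoid.

Section RunKeys.
Variables (Sigma : Type) (B : eqType) (SB : strong_bimonoid B) (S : Type).
Variable delta : seq S -> Sigma -> S -> B.
Local Notation mul := (sb_mul SB).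

Fixpoint wt_children (rho : seq nat -> S) (ts : seq (tree Sigma)) (i : nat) : B :=
  if ts is t :: ts' then mul (wt SB delta t (restr rho i)) (wt_children rho ts' i.+1)
  else sb_one SB.

Lemma wt_node s ts rho : wt SB delta (Node s ts) rho =
  mul (wt_children rho ts 1) (delta [seq rho [:: i] | i <- iota 1 (size ts)] s (rho [::])).
Proof. by rewrite /=; congr (mul _ _); elim: ts 1 => //= t ts IH i; rewrite IH. Qed.

Lemma wt_children_mkrun q rs ts i0 rho : size rs = size ts ->
  (forall j, j < size ts -> restr rho (i0 + j) = nth (fun _ => q) rs j) ->
  wt_children rho ts i0 = bprod SB [seq wt SB delta p.1 p.2 | p <- zip ts rs].
Proof.
elim: ts rs i0 => [|t ts IH] [|r rs] i0 //= [size_rs] rho_rs.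
rewrite -(addn0 i0) rho_rs // addn0 (IH rs i0.+1) // => j j_lt.
by rewrite addSnnS rho_rs.
Qed.

Lemma mkrun_roots q (rs : seq (seq nat -> S)) :
  [seq mkrun q rs [:: i] | i <- iota 1 (size rs)] = [seq r [::] | r <- rs].
Proof.
rewrite -(addn0 1) iotaDl -map_comp /=.
by rewrite -{3}(mkseq_nth (fun _ => q) rs) /mkseq -map_comp.
Qed.

Definition run_key (t : tree Sigma) (rho : seq nat -> S) : S * B :=
  (rho [::], wt SB delta t rho).

Definition run_keys (states : seq S) (t : tree Sigma) : seq (S * B) :=
  [seq run_key t rho | rho <- runs states t].

Definition node_key s q (ks : seq (S * B)) : S * B :=
  (q, mul (bprod SB (map snd ks)) (delta (map fst ks) s q)).

Lemma run_key_mkrun s ts q rs : size rs = size ts ->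
  run_key (Node s ts) (mkrun q rs) =
  node_key s q [seq run_key p.1 p.2 | p <- zip ts rs].
Proof.
move=> size_rs; rewrite /run_key /node_key wt_node /=; congr (_, mul _ _).
  by rewrite -map_comp (@wt_children_mkrun q rs).
rewrite -map_comp -size_rs mkrun_roots; congr (delta _ s q).
by rewrite -[in LHS](@unzip2_zip _ _ ts rs) ?size_rs // /unzip2 -map_comp.
Qed.

Lemma run_keys_node states s ts :
  run_keys states (Node s ts) =
  [seq node_key s q ks | q <- states, ks <- cart (map (run_keys states) ts)].
Proof.
rewrite /run_keys runs_node map_allpairs cart_map_zip allpairs_mapr.
have := cart_sizes (map (runs states) ts); rewrite size_map.
move: (cart _) => C sizeC.
elim: states => // q states IH; rewrite !allpairs_cons IH; congr (_ ++ _).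
by apply: eq_map_In => rs /(all_In sizeC) /eqP; apply: run_key_mkrun.
Qed.

Lemma sem_run_keys states F t :
  sem_run SB states delta F t =
  \big[badd SB/sb_zero SB]_(k <- run_keys states t) mul k.2 (F k.1).
Proof. by rewrite /sem_run bsumE !big_map. Qed.

End RunKeys.

Section Theorem7p3.
Variables (Sigma : finType) (rank : Sigma -> nat) (B : eqType) (SB : strong_bimonoid B).
Variables (Q : finType) (delta : seq Q -> Sigma -> Q -> B) (F : Q -> B).
Hypothesis fop : finite_order_property rank SB delta F.

Local Notation mul := (sb_mul SB).
Local Notation one := (sb_one SB).
Local Notation zero := (sb_zero SB).
Local Notation inH := (inH rank SB delta).
Local Notation H := (Hlist rank SB delta).
Local Notation QH := (QH rank SB delta).
Local Notation HF := (HF rank SB delta F).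
Local Notation iA := (iA rank SB delta F).
Local Notation pA := (pA rank SB delta F).
Local Notation JA := (JA rank SB delta F).
Local Notation piof := (Defs.pi_of rank SB delta F).
Local Notation FR := (FR rank SB delta F).
Local Notation QR := (QR rank SB delta F).
Local Notation deltaR := (deltaR rank SB delta F).
Local Notation K := (run_keys SB delta (enum Q)).
Local Notation KR := (run_keys SB deltaR QR).
Local Notation wf := (wf_tree rank).

Lemma Hlist_spec : uniq H /\ forall b, b \in H <-> inH b.
Proof. by apply: enum_ofP; case: fop. Qed.

Lemma uniq_QH : uniq QH.
Proof.
apply: allpairs_uniq; [exact: enum_uniq | exact: Hlist_spec.1 |].
by move=> [? ?] [? ?] _ _ /= [-> ->].
Qed.

Lemma mem_QH (k : Q * B) : (k \in QH) = (k.2 \in H).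
Proof.
apply/allpairsP/idP => [[[q b] [_ Hb ->]] //|Hk].
by exists k; rewrite mem_enum; case: k Hk.
Qed.

Lemma finite_order_HF c : c \in HF -> finite_order SB c.
Proof. by case/allpairsP => -[a q] [Ha _ ->]; apply: fop.2; apply/Hlist_spec.2. Qed.

Lemma inH_wt t : wf t -> forall rho, inH (wt SB delta t rho).
Proof.
elim/tree_ind_In: t => s ts IH; rewrite wf_tree_node => /andP[/eqP size_ts wf_ts] rho.
have : inH (delta [seq rho [:: i] | i <- iota 1 (size ts)] s (rho [::])).
  by apply: inH_delta; rewrite size_map size_iota.
rewrite wt_node; move: (delta _ _ _) => d Hd.
elim: ts 1 IH wf_ts {size_ts} => [|t ts IHts] i IH /=; first by rewrite sb_mul1l.
case/andP=> wf_t wf_ts; rewrite -sb_mulA; apply: inH_mul.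
  exact: IH (or_introl _) wf_t _.
by apply: IHts wf_ts => t' t'ts; apply: IH; right.
Qed.

Lemma run_keys_in_QH t : wf t -> all (mem QH) (K t).
Proof.
by move=> wf_t; apply/allP => _ /mapP[rho _ ->]; rewrite inE mem_QH; apply/Hlist_spec.2/inH_wt.
Qed.

Lemma pi_ofE t : piof t = count_profile iA pA QH (K t).
Proof.
apply: eq_map => -[q b]; congr JA; rewrite /pcount count_map.
by apply: eq_count => rho; rewrite /= xpair_eqE.
Qed.

Lemma pi_of_determined s ts ts' : wf (Node s ts) -> wf (Node s ts') ->
  map piof ts = map piof ts' -> piof (Node s ts) = piof (Node s ts').
Proof.
rewrite !wf_tree_node => /andP[_ wf_ts] /andP[_ wf_ts'] pi_ts.
rewrite !pi_ofE; apply: eq_map => k; rewrite !run_keys_node !count_allpairs.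
apply: cycmod_sum => q _; apply: cycmod_count_cart uniq_QH _ _ _.
- by rewrite all_map; apply: sub_all wf_ts => t /run_keys_in_QH.
- by rewrite all_map; apply: sub_all wf_ts' => t /run_keys_in_QH.
by rewrite -!map_comp -!(eq_map pi_ofE).
Qed.

Lemma pA_gt0 : 0 < pA.
Proof.
rewrite /Defs.pA foldrE big_map big_seq; elim/big_ind: _ => // [m n m0 n0|c HFc].
  by rewrite lcmn_gt0 m0 n0.
by have [] := finite_order_period (finite_order_HF HFc).
Qed.

Lemma nsum_JA c n : c \in HF -> nsum SB (JA n) c = nsum SB n c.
Proof.
move=> HFc; apply: nsum_cycmod (finite_order_HF HFc) _ _.
  by rewrite /Defs.iA; apply: leq_bigmax_seq.
by rewrite /Defs.pA foldrE big_map (big_rem c HFc) /= dvdn_lcml.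
Qed.

Lemma FR_pi_of t : wf t -> FR (piof t) = semA SB delta F t.
Proof.
move=> wf_t; rewrite /semA sem_run_keys (big_count_mem_iter _ _ uniq_QH (run_keys_in_QH wf_t)).
rewrite /Defs.FR pi_ofE /count_profile -{2}(map_id QH) zip_map bsumE !big_map.
apply: eq_big_seq => -[q b]; rewrite mem_QH => Hb /=; rewrite nsum_JA //.
by apply: (allpairs_f (fun a q => mul a (F q))); rewrite ?mem_enum.
Qed.

Lemma QR_spec : uniq QR /\ forall p, p \in QR <-> exists t, wf t /\ piof t = p.
Proof.
apply: enum_ofP; exists (cart (nseq (size QH) (iota 0 (iA + pA)))) => _ [t [_ <-]].
have <- : size (piof t) = size QH by rewrite size_map.
apply: mem_cart_nseq; apply/allP => _ /mapP[k _ ->]; rewrite inE mem_iota /= /Defs.JA.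
by rewrite add0n; case: ifP => [/ltn_addr //|_]; rewrite ltn_add2l ltn_mod pA_gt0.
Qed.

Lemma deltaR_pi_of s ts q : wf (Node s ts) ->
  deltaR (map piof ts) s q = if q == piof (Node s ts) then one else zero.
Proof.
move=> wf_t; rewrite /Defs.deltaR; case: asboolP => [[ts' [wf_t' [pi_ts <-]]]|no_ts'].
  by rewrite (pi_of_determined wf_t' wf_t pi_ts) eqxx.
by case: eqP => // q_pi; case: no_ts'; exists ts.
Qed.

Lemma run_keysR_nonzero t : wf t -> [seq k <- KR t | k.2 != zero] = [:: (piof t, one)].
Proof.
elim/tree_ind_In: t => s ts IH wf_t; move: (wf_t); rewrite wf_tree_node => /andP[_ wf_ts].
(* zero is absorbing, so a nonzero key only arises from nonzero child keys *)
rewrite run_keys_node (@filter_allpairs_restr _ _ _ _ (all (fun k => k.2 != zero))).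
  rewrite filter_all_cart -map_comp.
  rewrite (eq_map_In (g := fun t => [:: (piof t, one)])); last first.
    by move=> t' t'ts; apply: IH => //; apply: all_In wf_ts t'ts.
  rewrite cart_seq1 allpairs1r /node_key -!map_comp bprod_map_one.
  under eq_map do rewrite sb_mul1l deltaR_pi_of //.
  have [uQR memQR] := QR_spec.
  rewrite filter_map (@eq_filter _ _ (pred1 (piof (Node s ts)))) => [|q /=].
    by rewrite filter_pred1_uniq //= ?eqxx //; apply/memQR; exists (Node s ts).
  by case: (q =P piof (Node s ts)); rewrite ?eqxx ?sb_one_neq0.
move=> q ks; apply: contraTT => /allPn[k k_ks /negPn/eqP k0]; apply/negPn/eqP.
rewrite /node_key /= bprod_eq0 ?sb_mul0l //; apply/mapP; by exists k.
Qed.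

Lemma semR_pi_of t : wf t -> semR rank SB delta F t = FR (piof t).
Proof.
move=> wf_t; rewrite /semR sem_run_keys -(big_rmcond _ _ (P := fun k => k.2 != zero)).
  by rewrite -big_filter run_keysR_nonzero // big_seq1 sb_mul1l.
by move=> k /negPn/eqP ->; apply: sb_mul0l.
Qed.

End Theorem7p3.

Unset Implicit Arguments.

Theorem theorem7p3 (Sigma : finType) (rank : Sigma -> nat)
  (Hnullary : exists s : Sigma, rank s = 0)
  (B : eqType) (SB : strong_bimonoid B)
  (Q : finType) (HQ : 0 < #|Q|)
  (delta : seq Q -> Sigma -> Q -> B) (F : Q -> B) :
  finite_order_property rank SB delta F ->
  forall t : tree Sigma, wf_tree rank t ->
    semR rank SB delta F t = semA SB delta F t.
Proof.
move=> fop t wf_t.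
by rewrite (semR_pi_of fop wf_t) (FR_pi_of fop wf_t).
Qed.
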